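(* Let $\alpha>-1/2$, $n\in\mathbb{Z}_0^+$, assume $f\in C^{n+1}[-1,1]$ with $\|f^{(n+1)}\|_{L^\infty[-1,1]}\le A$ for a constant $A>0$ independent of $n$, and let $\int_{-1}^{x_{n,j}^{(\alpha)}}f(x)\,dx$ be approximated by the barycentric Gegenbauer quadrature $\sum_{i=0}^n p_{B,j,i}^{(1)}f(x_{n,i}^{(\alpha)})$ for each GG node $x_{n,j}^{(\alpha)}$, $j=0,\dots,n$, with truncation error $E_n^{(\alpha)}(x_{n,j}^{(\alpha)},\zeta_{n,j}^{(\alpha)})$. Then there exist positive constants $D_1^{(\alpha)},D_2^{(\alpha)}$ independent of $n$ such that: (i) if $\alpha\ge0$: $|E_n^{(\alpha)}|\le \dfrac{A\,2^{-n}(x_{n,j}^{(\alpha)}+1)\,\Gamma(\alpha+1)\,\Gamma(n+2\alpha+1)}{\Gamma(2\alpha+1)\,\Gamma(n+2)\,\Gamma(n+\alpha+1)}$; (ii) if $\frac{n+1}{2}\in\mathbb{Z}^+$ and $-\frac12<\alpha<0$: $|E_n^{(\alpha)}|\le \dfrac{A\,2^{-n-1}(x_{n,j}^{(\alpha)}+1)\,\Gamma(\alpha)}{\Gamma(n+\alpha+1)}\dbinom{\frac{n-1}{2}+\alpha}{\frac{n+1}{2}}$; (iii) if $\frac n2\in\mathbb{Z}_0^+$ and $-\frac12<\alpha<0$: $|E_n^{(\alpha)}|< \dfrac{A\,2^{-n}(x_{n,j}^{(\alpha)}+1)\,\Gamma(\alpha+1)}{\sqrt{(n+1)(2\alpha+n+1)}\,\Gamma(n+\alpha+1)}\dbinom{\frac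 n2+\alpha}{\frac n2}$. Moreover, as $n\to\infty$, asymptotically $|E_n^{(\alpha)}|\lesssim B_1^{(\alpha)}(e/2)^n(x_{n,j}^{(\alpha)}+1)\,n^{\alpha-n-3/2}$ if $\alpha\ge0$, and $|E_n^{(\alpha)}|\lesssim B_2^{(\alpha)}(e/2)^n(x_{n,j}^{(\alpha)}+1)\,n^{-n-3/2}$ if $-\frac12<\alpha<0$, for all $j=0,\dots,n$, where $B_1^{(\alpha)}=AD_1^{(\alpha)}$ and $B_2^{(\alpha)}=B_1^{(\alpha)}D_2^{(\alpha)}$.
   Context: For $\alpha>-1/2$ and integer $n\ge0$, the Gegenbauer polynomial $G_n^{(\alpha)}$ is the Jacobi polynomial $P_n^{(\alpha-1/2,\alpha-1/2)}$ normalized so that $G_n^{(\alpha)}(1)=1$; $K_n^{(\alpha)}$ is its leading coefficient. GG nodes $x_{n,0}^{(\alpha)},\dots,x_{n,n}^{(\alpha)}$ are the zeros of $G_{n+1}^{(\alpha)}$. The barycentric GIM entries are $p_{B,j,i}^{(1)}=\int_{-1}^{x_{n,j}^{(\alpha)}}\mathcal{L}_{B,n,i}^{(\alpha)}(x)\,dx$, where $\mathcal{L}_{B,n,i}^{(\alpha)}$ is the degree-$n$ Lagrange basis polynomial at the GG nodes. The truncation error is $E_n^{(\alpha)}(x_{n,j}^{(\alpha)},\zeta_{n,j}^{(\alpha)})=\frac{f^{(n+1)}(\zeta_{n,j}^{(\alpha)})}{(n+1)!\,K_{n+1}^{(\alpha)}}\int_{-1}^{x_{n,j}^{(\alpha)}}G_{n+1}^{(\alpha)}(x)\,dx$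 for some $\zeta_{n,j}^{(\alpha)}\in[-1,1]$. Binomial coefficients with non-integer upper argument are $\binom{a}{b}=\Gamma(a+1)/(\Gamma(b+1)\Gamma(a-b+1))$. The symbol $\lesssim$ denotes an asymptotic inequality as $n\to\infty$. *)

From Stdlib Require Import Reals Lra Lia Arith Factorial ClassicalEpsilon.
Open Scope R_scope.

Definition gauss_seq (x : R) (m : nat) : R :=
  INR (fact m) * Rpower (INR m) x / prod_f_R0 (fun k => x + INR k) m.

Definition Gamma (x : R) : R :=
  epsilon (inhabits 0) (fun g => Un_cv (gauss_seq x) g).

Definition binomR (a b : R) : R :=
  Gamma (a + 1) / (Gamma (b + 1) * Gamma (a - b + 1)).

Definition Rint (g : R -> R) (a b : R) : R :=
  epsilon (inhabits 0)
    (fun I => exists pr : Riemann_integrable g a b, RiemannInt pr = I).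

(* Coefficient sequences (coefficient of x^k), generated by the three-term
   recurrence of the normalized Gegenbauer polynomials (G_n(1) = 1):
     G_0 = 1,  G_1 = x,
     (N + 2a) G_{N+1}(x) = 2 (N + a) x G_N(x) - N G_{N-1}(x),  N >= 1.
   Gpair a m = (coeffs of G_m, coeffs of G_{m+1}). *)
Fixpoint Gpair (a : R) (m : nat) : (nat -> R) * (nat -> R) :=
  match m with
  | O => (fun k => if Nat.eqb k 0 then 1 else 0,
          fun k => if Nat.eqb k 1 then 1 else 0)
  | S m' =>
      let (p, q) := Gpair a m' in
      (q, fun k =>
            (2 * (INR m' + 1 + a) * (match k with O => 0 | S k' => q k' end)
             - (INR m' + 1) * p k) / (INR m' + 1 + 2 * a))
  end.

Definition Gcoef (a : R) (n k : nat) : R := fst (Gpair a n) k.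

Definition Geg (a : R) (n : nat) (x : R) : R :=
  sum_f_R0 (fun k => Gcoef a n k * x ^ k) n.

Definition Klead (a : R) (n : nat) : R := Gcoef a n n.

Definition Icc (x : R) : Prop := -1 <= x <= 1.

Definition deriv_within (g : R -> R) (x l : R) : Prop :=
  forall eps, 0 < eps -> exists delta, 0 < delta /\
    forall h, h <> 0 -> Rabs h < delta -> Icc (x + h) ->
      Rabs ((g (x + h) - g x) / h - l) < eps.

Definition cont_within (g : R -> R) (x : R) : Prop :=
  forall eps, 0 < eps -> exists delta, 0 < delta /\
    forall y, Icc y -> Rabs (y - x) < delta -> Rabs (g y - g x) < eps.

(* fd k is the k-th derivative of f on [-1,1] for k <= m, and fd m is
   continuous on [-1,1]: this says f in C^m[-1,1] with f^{(k)} = fd k. *)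
Definition derivs_C (m : nat) (f : R -> R) (fd : nat -> R -> R) : Prop :=
  (forall x, Icc x -> fd O x = f x) /\
  (forall k, (k < m)%nat -> forall x, Icc x -> deriv_within (fd k) x (fd (S k) x)) /\
  (forall x, Icc x -> cont_within (fd m) x).

Definition Eerr (a : R) (n : nat) (fd : nat -> R -> R) (x zeta : R) : R :=
  fd (S n) zeta / (INR (fact (S n)) * Klead a (S n))
  * Rint (Geg a (S n)) (-1) x.

From Stdlib Require Import Reals Lra Lia Factorial ClassicalEpsilon.
From Coquelicot Require Import Coquelicot.
Open Scope R_scope.

(* The error is [|f^(n+1)(zeta)| |int_(-1)^x G_(n+1)| / ((n+1)! K_(n+1))] and the integral is at
   most [(x + 1) max_[-1,1] |G_(n+1)|].  By the Gegenbauer differential equation, Sonine's function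
   [G^2 + (1 - t^2) G'^2 / ((n+1)(n+1+2a))] has a derivative of the sign of [a t] on [(-1, 1)], so
   the maximum is [G_(n+1)(1) = 1] when [a >= 0] and is bounded by the value of Sonine's function at
   [0] when [a < 0]; that value comes from the recurrence as an explicit product.  So is [K_(n+1)],
   and [Gamma (x + k) = Gamma x (x)_k] together with the duplication formula in product form turns
   these products into the stated Gamma quotients.  The asymptotic bounds follow from
   [n! >= n^(n+1/2) e^(-n)] and [prod_(j<n) (j+1+b) / (j+1+c) = Theta(n^(b-c))], both obtained by
   telescoping logarithms. *)


Lemma exp_ge_1_plus (y : R) : 1 + y <= exp y.
Proof.
  destruct (Req_dec y 0) as [-> | Hy]; [rewrite exp_0; lra | left; now apply exp_ineq1].
Qed.

Lemma exp_le_exp_of_le (x y : R) : x <= y -> exp x <= exp y.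
Proof. intros [H | ->]; [left; now apply exp_increasing | lra]. Qed.

Lemma ln_le_sub_1 (y : R) : 0 < y -> ln y <= y - 1.
Proof. intros Hy. pose proof (exp_ge_1_plus (ln y)) as H. rewrite exp_ln in H; lra. Qed.

Lemma ln_ge_1_sub_inv (y : R) : 0 < y -> 1 - / y <= ln y.
Proof.
  intros Hy. pose proof (ln_le_sub_1 (/ y) (Rinv_0_lt_compat _ Hy)) as H.
  rewrite ln_Rinv in H; lra.
Qed.

Lemma Rabs_le_of_sqr_le (u M : R) : 0 <= M -> u ^ 2 <= M ^ 2 -> Rabs u <= M.
Proof.
  intros HM H. rewrite <- (Rabs_right M) by lra. apply Rsqr_le_abs_0. rewrite !Rsqr_pow2. exact H.
Qed.

Lemma neg1_pow_sqr (k : nat) : ((-1) ^ k) ^ 2 = 1.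
Proof. rewrite <- pow_mult, Nat.mul_comm, pow_mult. replace ((-1) ^ 2) with 1 by ring. apply pow1. Qed.

Lemma INR_gt0 (m : nat) : (1 <= m)%nat -> 0 < INR m.
Proof. intros; apply lt_0_INR; lia. Qed.

Lemma ln_succ_bounds (m : nat) : (1 <= m)%nat ->
  / INR (S m) <= ln (INR (S m)) - ln (INR m) <= / INR m.
Proof.
  intros Hm. pose proof (INR_gt0 m Hm). rewrite S_INR.
  assert (E : ln (INR m + 1) - ln (INR m) = ln ((INR m + 1) / INR m)).
  { unfold Rdiv. rewrite ln_mult, ln_Rinv; try lra. apply Rinv_0_lt_compat; lra. }
  assert (P : 0 < (INR m + 1) / INR m) by (apply Rdiv_lt_0_compat; lra).
  rewrite E. split.
  - eapply Rle_trans; [| apply ln_ge_1_sub_inv; auto]. right. field. lra.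
  - eapply Rle_trans; [apply ln_le_sub_1; auto |]. right. field. lra.
Qed.

(* The trapezoid rule overestimates the integral of the convex function [1/s]. *)
Lemma ln_1_plus_le_trapezoid (t : R) : 0 <= t -> ln (1 + t) <= t * (2 + t) / (2 * (1 + t)).
Proof.
  intros Ht. destruct (Req_dec t 0) as [-> | Hne].
  { replace (1 + 0) with 1 by ring. rewrite ln_1. lra. }
  set (h := fun s => s * (2 + s) / (2 * (1 + s)) - ln (1 + s)).
  destruct (MVT_cor2 h (fun s => s ^ 2 / (2 * (1 + s) ^ 2)) 0 t) as [c [E Hc]]; [lra | |].
  { intros c Hc. apply is_derive_Reals. unfold h. auto_derive; [lra | field; lra]. }
  assert (h 0 = 0) by (unfold h; replace (1 + 0) with 1 by ring; rewrite ln_1; field).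
  assert (0 <= c ^ 2 / (2 * (1 + c) ^ 2) * (t - 0)).
  { apply Rmult_le_pos; [| lra]. apply Rmult_le_pos; [apply pow2_ge_0 |].
    left; apply Rinv_0_lt_compat, Rmult_lt_0_compat; [lra | apply pow_lt; lra]. }
  unfold h in *. lra.
Qed.

Lemma telescope_upper (s : nat -> R) (C : R) :
  (forall m, (1 <= m)%nat -> s (S m) - s m <= C * (/ INR m - / INR (S m))) ->
  forall m, (1 <= m)%nat -> s m - s 1%nat <= C * (1 - / INR m).
Proof.
  intros H m Hm. induction m as [| m IH]; [lia |].
  destruct (Nat.eq_dec m 0) as [-> | Hm0].
  - simpl. replace (C * (1 - / 1)) with 0 by field. lra.
  - specialize (IH ltac:(lia)). specialize (H m ltac:(lia)). lra.
Qed.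

Lemma Un_cv_of_rate (u : nat -> R) (l C : R) :
  (forall m, (1 <= m)%nat -> Rabs (u m - l) <= C / INR m) -> Un_cv u l.
Proof.
  intros H eps He.
  destruct (INR_archimed eps (Rabs C) He) as [N HN].
  exists (S N). intros n Hn. unfold Rdist. eapply Rle_lt_trans; [apply H; lia |].
  assert (HnN : INR (S N) <= INR n) by (apply le_INR; lia).
  pose proof (pos_INR N). rewrite S_INR in HnN.
  apply (Rmult_lt_reg_r (INR n)); [lra |]. unfold Rdiv. rewrite Rmult_assoc, Rinv_l by lra.
  pose proof (Rle_abs C).
  assert (eps * INR N <= eps * INR n) by (apply Rmult_le_compat_l; lra). lra.
Qed.

Lemma Un_cv_eventually_eq (u v : nat -> R) (l : R) :
  (forall m, (1 <= m)%nat -> u m = v m) -> Un_cv v l -> Un_cv u l.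
Proof.
  intros E H eps He. destruct (H eps He) as [N HN]. exists (S N). intros n Hn.
  rewrite E by lia. apply HN; lia.
Qed.


Lemma Rint_eq_RiemannInt (g : R -> R) (lo hi : R) (pr : Riemann_integrable g lo hi) :
  Rint g lo hi = RiemannInt pr.
Proof.
  unfold Rint.
  assert (H : exists I, exists pr : Riemann_integrable g lo hi, RiemannInt pr = I)
    by (exists (RiemannInt pr), pr; reflexivity).
  destruct (epsilon_spec (inhabits 0) _ H) as [pr' E]. rewrite <- E. apply RiemannInt_P5.
Qed.

Lemma RiemannInt_abs_le (g : R -> R) (lo hi M : R) (pr : Riemann_integrable g lo hi) :
  lo <= hi -> (forall t, lo < t < hi -> Rabs (g t) <= M) -> Rabs (RiemannInt pr) <= M * (hi - lo).
Proof.
  intros Hlh H. apply Rabs_le. split.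
  - replace (- (M * (hi - lo))) with (- M * (hi - lo)) by ring.
    rewrite <- (RiemannInt_P15 (RiemannInt_P14 lo hi (- M))).
    apply RiemannInt_P19; auto. intros t Ht. specialize (H t Ht).
    unfold fct_cte. apply Rabs_le_between in H. lra.
  - rewrite <- (RiemannInt_P15 (RiemannInt_P14 lo hi M)).
    apply RiemannInt_P19; auto. intros t Ht. specialize (H t Ht).
    unfold fct_cte. apply Rabs_le_between in H. lra.
Qed.

Lemma Rint_abs_le (g : R -> R) (lo hi M : R) : lo <= hi ->
  (forall t, lo <= t <= hi -> continuity_pt g t) ->
  (forall t, lo <= t <= hi -> Rabs (g t) <= M) -> Rabs (Rint g lo hi) <= M * (hi - lo).
Proof.
  intros Hlh Hc H. rewrite (Rint_eq_RiemannInt _ _ _ (continuity_implies_RiemannInt Hlh Hc)).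
  apply RiemannInt_abs_le; auto. intros t Ht. apply H; lra.
Qed.

(* Near [hi], where [g] vanishes, [|g|] stays below [M / 2]. *)
Lemma Rint_abs_lt (g : R -> R) (lo hi M : R) : lo < hi -> 0 < M -> g hi = 0 ->
  (forall t, lo <= t <= hi -> continuity_pt g t) ->
  (forall t, lo <= t <= hi -> Rabs (g t) <= M) -> Rabs (Rint g lo hi) < M * (hi - lo).
Proof.
  intros Hlh HM Hg0 Hc H.
  destruct (Hc hi ltac:(lra) (M / 2) ltac:(lra)) as [del [Hdel Hnear]].
  set (d := Rmin (del / 2) (hi - lo)).
  assert (Hd : 0 < d) by (unfold d; apply Rmin_glb_lt; lra).
  assert (Hd1 : d <= del / 2) by apply Rmin_l.
  assert (Hd2 : d <= hi - lo) by apply Rmin_r.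
  assert (Hc1 : forall t, lo <= t <= hi - d -> continuity_pt g t) by (intros; apply Hc; lra).
  assert (Hc2 : forall t, hi - d <= t <= hi -> continuity_pt g t) by (intros; apply Hc; lra).
  set (pr1 := @continuity_implies_RiemannInt g lo (hi - d) ltac:(lra) Hc1).
  set (pr2 := @continuity_implies_RiemannInt g (hi - d) hi ltac:(lra) Hc2).
  set (pr := @continuity_implies_RiemannInt g lo hi ltac:(lra) Hc).
  rewrite (Rint_eq_RiemannInt _ _ _ pr), <- (RiemannInt_P26 pr1 pr2 pr).
  assert (B1 : Rabs (RiemannInt pr1) <= M * (hi - d - lo)).
  { apply RiemannInt_abs_le; [lra |]. intros t Ht. apply H; lra. }
  assert (B2 : Rabs (RiemannInt pr2) <= M / 2 * (hi - (hi - d))).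
  { apply RiemannInt_abs_le; [lra |]. intros t Ht.
    assert (Hgt : Rabs (g t - g hi) < M / 2).
    { apply Hnear. split; [split; [exact I | intro; lra] |]. simpl. unfold R_dist.
      rewrite Rabs_left1; lra. }
    rewrite Hg0, Rminus_0_r in Hgt. lra. }
  pose proof (Rabs_triang (RiemannInt pr1) (RiemannInt pr2)). nra.
Qed.


(** * The Gamma function *)

Fixpoint prodn (f : nat -> R) (k : nat) : R :=
  match k with O => 1 | S k' => prodn f k' * f k' end.

Lemma prodn_S (f : nat -> R) (k : nat) : prodn f (S k) = prodn f k * f k.
Proof. reflexivity. Qed.

Lemma prodn_pos (f : nat -> R) (k : nat) : (forall j, (j < k)%nat -> 0 < f j) -> 0 < prodn f k.
Proof.
  intros H. induction k as [| k IH]; simpl; [lra |].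
  apply Rmult_lt_0_compat; [apply IH; intros j Hj |]; apply H; lia.
Qed.

Lemma prod_f_R0_prodn (f : nat -> R) (m : nat) : prod_f_R0 f m = prodn f (S m).
Proof. induction m as [| m IH]; simpl in *; [ring | now rewrite IH]. Qed.

Definition pochhammer (x : R) (k : nat) : R := prodn (fun j => x + INR j) k.

Lemma pochhammer_S (x : R) (k : nat) : pochhammer x (S k) = pochhammer x k * (x + INR k).
Proof. reflexivity. Qed.

Lemma pochhammer_pos (x : R) (k : nat) : 0 < x -> 0 < pochhammer x k.
Proof. intros Hx. apply prodn_pos. intros j _. pose proof (pos_INR j). lra. Qed.

Lemma pochhammer_neq_0 (x : R) (k : nat) : -1 < x -> x <> 0 -> pochhammer x k <> 0.
Proof.
  intros H1 H2. induction k as [| k IH]; [unfold pochhammer; simpl; lra |].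
  rewrite pochhammer_S. apply Rmult_integral_contrapositive; split; auto.
  destruct k as [| k]; [simpl INR; intro; apply H2; lra |].
  rewrite S_INR. pose proof (pos_INR k). lra.
Qed.

Lemma pochhammer_succ_l (x : R) (k : nat) : x * pochhammer (x + 1) k = pochhammer x (S k).
Proof.
  induction k as [| k IH]; [unfold pochhammer; simpl; ring |].
  rewrite pochhammer_S, (pochhammer_S x (S k)), <- IH, S_INR. ring.
Qed.

Lemma pochhammer_1 (k : nat) : pochhammer 1 k = INR (fact k).
Proof.
  induction k as [| k IH]; [reflexivity |].
  rewrite pochhammer_S, IH, fact_simpl, mult_INR, S_INR. ring.
Qed.

Lemma gauss_seq_pochhammer (x : R) (m : nat) :
  gauss_seq x m = INR (fact m) * Rpower (INR m) x / pochhammer x (S m).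
Proof. unfold gauss_seq. now rewrite prod_f_R0_prodn. Qed.

Definition gauss_ratio (x : R) (m : nat) : R :=
  INR (S m) * exp (x * (ln (INR (S m)) - ln (INR m))) / (x + INR (S m)).

Lemma gauss_seq_succ (x : R) (m : nat) : 0 < x -> (1 <= m)%nat ->
  gauss_seq x (S m) = gauss_seq x m * gauss_ratio x m.
Proof.
  intros Hx Hm. rewrite !gauss_seq_pochhammer, (pochhammer_S x (S m)). unfold gauss_ratio, Rpower.
  pose proof (pochhammer_pos x (S m) Hx). pose proof (pos_INR (S m)).
  rewrite fact_simpl, mult_INR.
  replace (x * (ln (INR (S m)) - ln (INR m))) with (x * ln (INR (S m)) + - (x * ln (INR m))) by ring.
  rewrite exp_plus, exp_Ropp.
  assert (exp (x * ln (INR m)) <> 0) by apply Rgt_not_eq, exp_pos.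
  field. repeat split; lra.
Qed.

Lemma gauss_seq_pos (x : R) (m : nat) : 0 < x -> 0 < gauss_seq x m.
Proof.
  intros Hx. rewrite gauss_seq_pochhammer. apply Rdiv_lt_0_compat.
  - apply Rmult_lt_0_compat; [apply lt_0_INR, lt_O_fact | apply exp_pos].
  - now apply pochhammer_pos.
Qed.

Lemma gauss_ratio_ge_1 (x : R) (m : nat) : 0 < x -> (1 <= m)%nat -> 1 <= gauss_ratio x m.
Proof.
  intros Hx Hm. destruct (ln_succ_bounds m Hm) as [L _]. unfold gauss_ratio.
  pose proof (INR_gt0 (S m) ltac:(lia)).
  pose proof (exp_ge_1_plus (x * (ln (INR (S m)) - ln (INR m)))).
  assert (x * / INR (S m) <= x * (ln (INR (S m)) - ln (INR m))) by (apply Rmult_le_compat_l; lra).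
  apply (Rmult_le_reg_r (x + INR (S m))); [lra |].
  unfold Rdiv. rewrite Rmult_assoc, Rinv_l, Rmult_1_r, Rmult_1_l by lra.
  replace (x + INR (S m)) with (INR (S m) * (1 + x * / INR (S m))) by (field; lra).
  apply Rmult_le_compat_l; lra.
Qed.

Lemma ln_gauss_ratio_le (x : R) (m : nat) : 0 < x -> (1 <= m)%nat ->
  ln (gauss_ratio x m) <= x * (1 + x) * (/ INR m - / INR (S m)).
Proof.
  intros Hx Hm. destruct (ln_succ_bounds m Hm) as [_ U].
  pose proof (INR_gt0 m Hm). pose proof (INR_gt0 (S m) ltac:(lia)).
  assert (E : ln (gauss_ratio x m)
              = x * (ln (INR (S m)) - ln (INR m)) + ln (INR (S m) / (x + INR (S m)))).
  { unfold gauss_ratio.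
    replace (INR (S m) * exp (x * (ln (INR (S m)) - ln (INR m))) / (x + INR (S m)))
      with (exp (x * (ln (INR (S m)) - ln (INR m))) * (INR (S m) / (x + INR (S m)))) by (field; lra).
    rewrite ln_mult, ln_exp; [reflexivity | apply exp_pos | apply Rdiv_lt_0_compat; lra]. }
  assert (ln (INR (S m) / (x + INR (S m))) <= - (x / (x + INR (S m)))).
  { eapply Rle_trans; [apply ln_le_sub_1, Rdiv_lt_0_compat; lra |]. right. field. lra. }
  assert (x * (ln (INR (S m)) - ln (INR m)) <= x / INR m) by (unfold Rdiv; apply Rmult_le_compat_l; lra).
  assert (x / INR m - x / (x + INR (S m)) <= x * (1 + x) * (/ INR m - / INR (S m))).
  { rewrite S_INR in *.
    replace (x / INR m - x / (x + (INR m + 1))) with (x * (1 + x) / (INR m * (INR m + 1 + x))) by (field; lra).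
    replace (x * (1 + x) * (/ INR m - / (INR m + 1))) with (x * (1 + x) / (INR m * (INR m + 1))) by (field; lra).
    unfold Rdiv. apply Rmult_le_compat_l; [nra |]. apply Rinv_le_contravar; nra. }
  lra.
Qed.

(* The Gauss sequence increases from [m = 1] on, and [ln (gauss_seq x)] telescopes to a bounded sum. *)
Lemma gauss_seq_cv (x : R) : 0 < x -> exists l, Un_cv (gauss_seq x) l /\ 0 < l.
Proof.
  intros Hx. set (v k := gauss_seq x (S k)).
  assert (Hg : Un_growing v).
  { intros k. unfold v. rewrite (gauss_seq_succ x (S k)) by (auto; lia).
    pose proof (gauss_seq_pos x (S k) Hx). pose proof (gauss_ratio_ge_1 x (S k) Hx ltac:(lia)).
    rewrite <- (Rmult_1_r (gauss_seq x (S k))) at 1. apply Rmult_le_compat_l; lra. }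
  assert (Hb : has_ub v).
  { exists (exp (ln (gauss_seq x 1) + x * (1 + x))). intros y [k ->]. unfold v.
    pose proof (gauss_seq_pos x (S k) Hx).
    rewrite <- (exp_ln (gauss_seq x (S k))) by auto. apply exp_le_exp_of_le.
    assert (T := telescope_upper (fun m => ln (gauss_seq x m)) (x * (1 + x))).
    assert (ln (gauss_seq x (S k)) - ln (gauss_seq x 1) <= x * (1 + x) * (1 - / INR (S k))).
    { apply T; [| lia]. intros m Hm. rewrite gauss_seq_succ, ln_mult by (auto using gauss_seq_pos;
        pose proof (gauss_ratio_ge_1 x m Hx Hm); lra).
      pose proof (ln_gauss_ratio_le x m Hx Hm). lra. }
    pose proof (INR_gt0 (S k) ltac:(lia)).
    assert (0 < / INR (S k)) by (apply Rinv_0_lt_compat; lra).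
    assert (0 < x * (1 + x)) by nra. nra. }
  destruct (growing_cv v Hg Hb) as [l Hl]. exists l. split.
  - intros eps He. destruct (Hl eps He) as [N HN]. exists (S N). intros [| n] Hn; [lia |]. apply HN; lia.
  - pose proof (growing_ineq v l Hg Hl 0%nat). pose proof (gauss_seq_pos x 1 Hx). unfold v in *. lra.
Qed.

Lemma Gamma_unique (x l : R) : Un_cv (gauss_seq x) l -> Gamma x = l.
Proof.
  intros H. unfold Gamma. apply UL_sequence with (gauss_seq x); auto.
  apply epsilon_spec. now exists l.
Qed.

Lemma Gamma_cv (x : R) : 0 < x -> Un_cv (gauss_seq x) (Gamma x).
Proof. intros Hx. destruct (gauss_seq_cv x Hx) as [l [H _]]. now rewrite (Gamma_unique x l H). Qed.

Lemma Gamma_pos (x : R) : 0 < x -> 0 < Gamma x.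
Proof. intros Hx. destruct (gauss_seq_cv x Hx) as [l [H Hl]]. now rewrite (Gamma_unique x l H). Qed.

Lemma gauss_seq_shift (x : R) (m : nat) : -1 < x -> x <> 0 -> (1 <= m)%nat ->
  gauss_seq x m = gauss_seq (x + 1) m * ((x + INR m + 1) / (INR m * x)).
Proof.
  intros H1 H2 Hm. pose proof (INR_gt0 m Hm). rewrite !gauss_seq_pochhammer. unfold Rpower.
  rewrite Rmult_plus_distr_r, Rmult_1_l, exp_plus, exp_ln by lra.
  assert (E : pochhammer (x + 1) (S m) = pochhammer x (S m) * (x + INR m + 1) / x).
  { apply (Rmult_eq_reg_l x); [| lra].
    rewrite pochhammer_succ_l, (pochhammer_S x (S m)), S_INR. field. lra. }
  rewrite E. pose proof (pochhammer_neq_0 x (S m) H1 H2). field. repeat split; lra.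
Qed.

Lemma Gamma_succ (x : R) : -1 < x -> x <> 0 -> Gamma (x + 1) = x * Gamma x.
Proof.
  intros H1 H2.
  assert (Cx : Un_cv (gauss_seq x) (Gamma (x + 1) * / x)).
  { apply Un_cv_eventually_eq with (fun m => gauss_seq (x + 1) m * ((x + INR m + 1) / (INR m * x))).
    { intros; apply gauss_seq_shift; auto. }
    apply CV_mult; [apply Gamma_cv; lra |].
    apply Un_cv_of_rate with (C := Rabs ((x + 1) / x)). intros m Hm. pose proof (INR_gt0 m Hm).
    replace ((x + INR m + 1) / (INR m * x) - / x) with (((x + 1) / x) / INR m) by (field; lra).
    unfold Rdiv at 1. rewrite Rabs_mult, Rabs_inv, (Rabs_right (INR m)) by lra. lra. }
  rewrite (Gamma_unique x _ Cx). field. exact H2.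
Qed.

Lemma Gamma_1 : Gamma 1 = 1.
Proof.
  apply Gamma_unique, Un_cv_of_rate with (C := 1). intros m Hm. pose proof (INR_gt0 m Hm).
  rewrite gauss_seq_pochhammer, pochhammer_1, Rpower_1 by lra.
  rewrite fact_simpl, mult_INR, S_INR.
  pose proof (INR_fact_lt_0 m).
  replace (INR (fact m) * INR m / ((INR m + 1) * INR (fact m)) - 1) with (- / (INR m + 1)) by (field; lra).
  rewrite Rabs_Ropp, Rabs_right by (left; apply Rinv_0_lt_compat; lra).
  unfold Rdiv. rewrite Rmult_1_l. apply Rinv_le_contravar; lra.
Qed.

Lemma Gamma_add_nat (x : R) (k : nat) : 0 < x -> Gamma (x + INR k) = Gamma x * pochhammer x k.
Proof.
  intros Hx. induction k as [| k IH]; [unfold pochhammer; simpl; rewrite Rplus_0_r; ring |].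
  rewrite pochhammer_S, S_INR. replace (x + (INR k + 1)) with (x + INR k + 1) by ring.
  pose proof (pos_INR k). rewrite Gamma_succ, IH by lra. ring.
Qed.

Lemma Gamma_nat (k : nat) : Gamma (INR k + 1) = INR (fact k).
Proof. rewrite Rplus_comm, Gamma_add_nat, Gamma_1, pochhammer_1 by lra. ring. Qed.


(** * Products of ratios and a lower Stirling bound *)

Lemma ln_1_plus_approx (y : R) : -1 < y -> Rabs (ln (1 + y) - y) <= y ^ 2 / (1 + y).
Proof.
  intros Hy. pose proof (ln_le_sub_1 (1 + y) ltac:(lra)).
  pose proof (ln_ge_1_sub_inv (1 + y) ltac:(lra)).
  replace (y ^ 2 / (1 + y)) with (y - (1 - / (1 + y))) by (field; lra).
  rewrite Rabs_minus_sym, Rabs_right; lra.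
Qed.

Definition ratio_prod (b c : R) (n : nat) : R :=
  prodn (fun j => (INR j + 1 + b) / (INR j + 1 + c)) n.

Lemma ratio_prod_pos (b c : R) (n : nat) : -1 < b -> -1 < c -> 0 < ratio_prod b c n.
Proof.
  intros Hb Hc. apply prodn_pos. intros j _. pose proof (pos_INR j).
  apply Rdiv_lt_0_compat; lra.
Qed.

Lemma ln_1_plus_frac_approx (e : R) (n : nat) : -1 < e -> (1 <= n)%nat ->
  Rabs (ln (1 + e / (INR n + 1)) - e / (INR n + 1)) <= e ^ 2 * (/ INR n - / INR (S n)).
Proof.
  intros He Hn. pose proof (INR_gt0 n Hn). rewrite S_INR.
  assert (-1 < e / (INR n + 1)).
  { apply (Rmult_lt_reg_r (INR n + 1)); [lra |]. unfold Rdiv. rewrite Rmult_assoc, Rinv_l; lra. }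
  eapply Rle_trans; [apply ln_1_plus_approx; auto |].
  replace ((e / (INR n + 1)) ^ 2 / (1 + e / (INR n + 1)))
    with (e ^ 2 * / ((INR n + 1) * (INR n + 1 + e))) by (field; lra).
  replace (/ INR n - / (INR n + 1)) with (/ ((INR n + 1) * INR n)) by (field; lra).
  apply Rmult_le_compat_l; [apply pow2_ge_0 |]. apply Rinv_le_contravar; nra.
Qed.

Definition ratio_prod_log (b c : R) (n : nat) : R := (c - b) * ln (INR n) + ln (ratio_prod b c n).

Lemma ratio_prod_log_succ (b c : R) (n : nat) : -1 < b -> -1 < c -> (1 <= n)%nat ->
  ratio_prod_log b c (S n) - ratio_prod_log b c n
  = (c - b) * (/ INR n - / INR (S n)) + (c - b) * (ln (1 + / INR n) - / INR n)
    + (ln (1 + b / (INR n + 1)) - b / (INR n + 1)) - (ln (1 + c / (INR n + 1)) - c / (INR n + 1)).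
Proof.
  intros Hb Hc Hn. pose proof (INR_gt0 n Hn) as Hn0.
  assert (0 < 1 + / INR n) by (pose proof (Rinv_0_lt_compat _ Hn0); lra).
  assert (0 < 1 + b / (INR n + 1) /\ 0 < 1 + c / (INR n + 1)) as [Pb Pc].
  { split; apply (Rmult_lt_reg_r (INR n + 1)); try lra; field_simplify; lra. }
  assert (L1 : ln (INR (S n)) = ln (INR n) + ln (1 + / INR n)).
  { rewrite <- ln_mult by lra. f_equal. rewrite S_INR. field. lra. }
  assert (L2 : ln ((INR n + 1 + b) / (INR n + 1 + c))
               = ln (1 + b / (INR n + 1)) - ln (1 + c / (INR n + 1))).
  { unfold Rminus. rewrite <- ln_Rinv, <- ln_mult by (try apply Rinv_0_lt_compat; lra).
    f_equal. field. lra. }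
  unfold ratio_prod_log, ratio_prod. rewrite prodn_S. fold (ratio_prod b c n).
  rewrite ln_mult, L1, L2 by (auto using ratio_prod_pos; apply Rdiv_lt_0_compat; lra).
  rewrite S_INR. field. lra.
Qed.

(* Each of the three logarithms in the increment is [y + O(y^2)]; the first-order terms cancel
   up to [(c - b) (1/n - 1/(n+1))]. *)
Lemma ratio_prod_log_step (b c : R) (n : nat) : -1 < b -> -1 < c -> (1 <= n)%nat ->
  Rabs (ratio_prod_log b c (S n) - ratio_prod_log b c n)
  <= (2 * Rabs (c - b) + b ^ 2 + c ^ 2) * (/ INR n - / INR (S n)).
Proof.
  intros Hb Hc Hn. pose proof (INR_gt0 n Hn) as Hn0. rewrite ratio_prod_log_succ by auto.
  set (w := / INR n - / INR (S n)).
  assert (Hw : 0 <= w).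
  { unfold w. rewrite S_INR. assert (/ (INR n + 1) <= / INR n) by (apply Rinv_le_contravar; lra). lra. }
  assert (B1 : Rabs ((c - b) * w) <= Rabs (c - b) * w) by (rewrite Rabs_mult, (Rabs_right w); lra).
  assert (B2 : Rabs ((c - b) * (ln (1 + / INR n) - / INR n)) <= Rabs (c - b) * w).
  { rewrite Rabs_mult. apply Rmult_le_compat_l; [apply Rabs_pos |].
    eapply Rle_trans; [apply ln_1_plus_approx; pose proof (Rinv_0_lt_compat _ Hn0); lra |].
    right. unfold w. rewrite S_INR. field. lra. }
  pose proof (ln_1_plus_frac_approx b n Hb Hn) as B3. pose proof (ln_1_plus_frac_approx c n Hc Hn) as B4.
  fold w in B3, B4.
  set (X1 := (c - b) * w) in *. set (X2 := (c - b) * (ln (1 + / INR n) - / INR n)) in *.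
  set (X3 := ln (1 + b / (INR n + 1)) - b / (INR n + 1)) in *.
  set (X4 := ln (1 + c / (INR n + 1)) - c / (INR n + 1)) in *.
  pose proof (Rabs_triang (X1 + X2 + X3) (- X4)). pose proof (Rabs_triang (X1 + X2) X3).
  pose proof (Rabs_triang X1 X2). rewrite Rabs_Ropp in *.
  change (X1 + X2 + X3 - X4) with (X1 + X2 + X3 + - X4).
  replace ((2 * Rabs (c - b) + b ^ 2 + c ^ 2) * w)
    with (Rabs (c - b) * w + Rabs (c - b) * w + b ^ 2 * w + c ^ 2 * w) by ring.
  lra.
Qed.

Lemma ratio_prod_bounds (b c : R) : -1 < b -> -1 < c -> exists L U, 0 < L /\ 0 < U /\
  forall n, (1 <= n)%nat -> L <= Rpower (INR n) (c - b) * ratio_prod b c n <= U.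
Proof.
  intros Hb Hc. set (K := 2 * Rabs (c - b) + b ^ 2 + c ^ 2).
  assert (K0 : 0 <= K) by (unfold K; pose proof (Rabs_pos (c - b)); nra).
  exists (exp (ratio_prod_log b c 1 - K)), (exp (ratio_prod_log b c 1 + K)).
  split; [apply exp_pos |]. split; [apply exp_pos |]. intros n Hn.
  assert (E : Rpower (INR n) (c - b) * ratio_prod b c n = exp (ratio_prod_log b c n)).
  { unfold ratio_prod_log, Rpower. rewrite exp_plus, exp_ln; auto using ratio_prod_pos. }
  rewrite E.
  assert (Hs := fun m Hm => proj1 (Rabs_le_between _ _) (ratio_prod_log_step b c m Hb Hc Hm)).
  fold K in Hs.
  pose proof (telescope_upper (ratio_prod_log b c) K ltac:(intros m Hm; specialize (Hs m Hm); lra) n Hn).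
  pose proof (telescope_upper (fun k => - ratio_prod_log b c k) K
                ltac:(intros m Hm; specialize (Hs m Hm); lra) n Hn).
  pose proof (INR_gt0 n Hn).
  assert (0 < / INR n <= 1).
  { split; [now apply Rinv_0_lt_compat |]. rewrite <- Rinv_1. apply Rinv_le_contravar; [lra |].
    apply (le_INR 1); exact Hn. }
  split; apply exp_le_exp_of_le; nra.
Qed.

Definition stirling_log (n : nat) : R := ln (INR (fact n)) + INR n - (INR n + / 2) * ln (INR n).

Lemma stirling_log_step (m : nat) : (1 <= m)%nat ->
  stirling_log m - / 4 * (/ INR m - / INR (S m)) <= stirling_log (S m).
Proof.
  intros Hm. pose proof (INR_gt0 m Hm) as Hm0. unfold stirling_log.
  rewrite fact_simpl, mult_INR, ln_mult by (apply INR_fact_lt_0 || apply INR_gt0; lia).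
  assert (E : ln (INR (S m)) = ln (INR m) + ln (1 + / INR m)).
  { rewrite <- ln_mult by (pose proof (Rinv_0_lt_compat _ Hm0); lra). f_equal. rewrite S_INR. field. lra. }
  rewrite E.
  pose proof (ln_1_plus_le_trapezoid (/ INR m) ltac:(left; apply Rinv_0_lt_compat; lra)) as T.
  assert ((INR m + / 2) * ln (1 + / INR m) <= 1 + / 4 * (/ INR m - / INR (S m))).
  { eapply Rle_trans; [apply Rmult_le_compat_l; [lra | exact T] |]. right. rewrite S_INR. field. lra. }
  rewrite S_INR in *. lra.
Qed.

Lemma stirling_lower (n : nat) : (1 <= n)%nat ->
  Rpower (INR n) (INR n + / 2) * exp (- INR n) <= INR (fact n).
Proof.
  intros Hn. pose proof (INR_gt0 n Hn).
  pose proof (telescope_upper (fun k => - stirling_log k) (/ 4)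
                ltac:(intros m Hm; pose proof (stirling_log_step m Hm); lra) n Hn).
  assert (stirling_log 1 = 1) by (unfold stirling_log; simpl; rewrite ln_1; field).
  assert (0 < / INR n) by (apply Rinv_0_lt_compat; lra).
  rewrite <- (exp_ln (INR (fact n))) by apply INR_fact_lt_0.
  unfold Rpower. rewrite <- exp_plus. apply exp_le_exp_of_le.
  unfold stirling_log in *. lra.
Qed.


(** * Gegenbauer polynomials: recurrence, symmetry, location of the zeros *)

Lemma sum_f_R0_extend_zero (c : nat -> R) (x : R) (N M : nat) :
  (forall k, (N < k)%nat -> c k = 0) -> (N <= M)%nat ->
  sum_f_R0 (fun k => c k * x ^ k) M = sum_f_R0 (fun k => c k * x ^ k) N.
Proof.
  intros Hc HNM. induction HNM as [| M HNM IH]; [reflexivity |].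
  simpl. rewrite IH, Hc by lia. ring.
Qed.

Lemma sum_f_R0_lin_comb (s t : nat -> R) (al be d : R) (M : nat) :
  sum_f_R0 (fun k => (al * s k - be * t k) / d) M = (al * sum_f_R0 s M - be * sum_f_R0 t M) / d.
Proof. induction M as [| M IH]; simpl; [reflexivity |]. rewrite IH. unfold Rdiv; ring. Qed.

Lemma sum_f_R0_mul_x (c : nat -> R) (x : R) (M : nat) :
  sum_f_R0 (fun k => (match k with O => 0 | S k' => c k' end) * x ^ k) (S M) =
  x * sum_f_R0 (fun k => c k * x ^ k) M.
Proof. induction M as [| M IH]; [simpl; ring |]. rewrite tech5, IH. simpl. ring. Qed.

Lemma nat_ind2 (P : nat -> Prop) :
  P 0%nat -> P 1%nat -> (forall m, P m -> P (S m) -> P (S (S m))) -> forall m, P m.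
Proof.
  intros H0 H1 HS m. enough (P m /\ P (S m)) by tauto.
  induction m as [| m [IH1 IH2]]; auto.
Qed.

Section Gegenbauer.
Variable a : R.

Lemma Gcoef_SS (m k : nat) : Gcoef a (S (S m)) k =
  (2 * (INR m + 1 + a) * (match k with O => 0 | S k' => Gcoef a (S m) k' end)
   - (INR m + 1) * Gcoef a m k) / (INR m + 1 + 2 * a).
Proof. unfold Gcoef. simpl. destruct (Gpair a m). reflexivity. Qed.

Lemma Gcoef_above_degree (m k : nat) : (m < k)%nat -> Gcoef a m k = 0.
Proof.
  revert k. induction m as [| | m IH1 IH2] using nat_ind2; intros k Hk.
  - unfold Gcoef; simpl. destruct (Nat.eqb_spec k 0); [lia | reflexivity].
  - unfold Gcoef; simpl. destruct (Nat.eqb_spec k 1); [lia | reflexivity].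
  - rewrite Gcoef_SS. destruct k as [| k]; [lia |].
    rewrite IH1, IH2 by lia. unfold Rdiv; ring.
Qed.

Lemma Geg_0 (x : R) : Geg a 0 x = 1.
Proof. unfold Geg, Gcoef. simpl. ring. Qed.

Lemma Geg_1 (x : R) : Geg a 1 x = x.
Proof. unfold Geg, Gcoef. simpl. ring. Qed.

Lemma Geg_SS (m : nat) (x : R) : Geg a (S (S m)) x =
  (2 * (INR m + 1 + a) * x * Geg a (S m) x - (INR m + 1) * Geg a m x) / (INR m + 1 + 2 * a).
Proof.
  unfold Geg at 1.
  transitivity (sum_f_R0 (fun k =>
    (2 * (INR m + 1 + a) * ((match k with O => 0 | S k' => Gcoef a (S m) k' end) * x ^ k)
     - (INR m + 1) * (Gcoef a m k * x ^ k)) / (INR m + 1 + 2 * a)) (S (S m))).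
  { apply sum_eq. intros i _. rewrite Gcoef_SS. unfold Rdiv; ring. }
  rewrite sum_f_R0_lin_comb, sum_f_R0_mul_x.
  rewrite (sum_f_R0_extend_zero (Gcoef a m) x m (S (S m))) by auto using Gcoef_above_degree.
  unfold Geg, Rdiv; ring.
Qed.

Fixpoint dGeg (m : nat) (x : R) : R :=
  match m with
  | O => 0
  | S O => 1
  | S (S k as m') =>
      (2 * (INR k + 1 + a) * (Geg a m' x + x * dGeg m' x) - (INR k + 1) * dGeg k x)
      / (INR k + 1 + 2 * a)
  end.

Fixpoint d2Geg (m : nat) (x : R) : R :=
  match m with
  | O | S O => 0
  | S (S k as m') =>
      (2 * (INR k + 1 + a) * (2 * dGeg m' x + x * d2Geg m' x) - (INR k + 1) * d2Geg k x)
      / (INR k + 1 + 2 * a)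
  end.

Lemma dGeg_SS (m : nat) (x : R) : dGeg (S (S m)) x =
  (2 * (INR m + 1 + a) * (Geg a (S m) x + x * dGeg (S m) x) - (INR m + 1) * dGeg m x)
  / (INR m + 1 + 2 * a).
Proof. reflexivity. Qed.

Lemma d2Geg_SS (m : nat) (x : R) : d2Geg (S (S m)) x =
  (2 * (INR m + 1 + a) * (2 * dGeg (S m) x + x * d2Geg (S m) x) - (INR m + 1) * d2Geg m x)
  / (INR m + 1 + 2 * a).
Proof. reflexivity. Qed.

Hypothesis Ha : -1/2 < a.

Lemma Geg_denom_pos (m : nat) : 0 < INR m + 1 + 2 * a.
Proof. pose proof (pos_INR m); lra. Qed.

Lemma Geg_at_1 (m : nat) : Geg a m 1 = 1.
Proof.
  induction m as [| | m IH1 IH2] using nat_ind2; [apply Geg_0 | apply Geg_1 |].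
  rewrite Geg_SS, IH1, IH2. pose proof (Geg_denom_pos m). field. lra.
Qed.

Lemma Geg_opp (m : nat) (x : R) : Geg a m (- x) = (-1) ^ m * Geg a m x.
Proof.
  induction m as [| | m IH1 IH2] using nat_ind2; [rewrite !Geg_0; ring | rewrite !Geg_1; ring |].
  rewrite !Geg_SS, IH1, IH2. simpl. pose proof (Geg_denom_pos m). field. lra.
Qed.

Lemma Geg_ge_1 (m : nat) (x : R) : 1 <= x -> 1 <= Geg a m x <= Geg a (S m) x.
Proof.
  intros Hx. induction m as [| m [I1 I2]]; [rewrite Geg_0, Geg_1; lra |].
  split; [lra |]. rewrite Geg_SS. pose proof (Geg_denom_pos m). pose proof (pos_INR m).
  apply (Rmult_le_reg_r (INR m + 1 + 2 * a)); [lra |].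
  unfold Rdiv. rewrite Rmult_assoc, Rinv_l, Rmult_1_r by lra.
  assert (Geg a (S m) x <= x * Geg a (S m) x).
  { rewrite <- (Rmult_1_l (Geg a (S m) x)) at 1. apply Rmult_le_compat_r; lra. }
  assert ((INR m + 1) * Geg a m x <= (INR m + 1) * Geg a (S m) x) by (apply Rmult_le_compat_l; lra).
  nra.
Qed.

(* By symmetry it suffices that [G_(m+1) >= 1] on [[1, oo)]. *)
Lemma Geg_root_in (m : nat) (x : R) : Geg a (S m) x = 0 -> -1 < x < 1.
Proof.
  intros H. split; apply Rnot_le_lt; intros Hx.
  - pose proof (Geg_opp (S m) x) as P. rewrite H in P.
    destruct (Geg_ge_1 (S m) (- x)) as [Q _]; [lra |].
    rewrite P, Rmult_0_r in Q. lra.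
  - destruct (Geg_ge_1 (S m) x) as [Q _]; lra.
Qed.

End Gegenbauer.


(** * Derivatives and the differential equation *)

Lemma derivable_pt_lim_recurrence (h f g : R -> R) (dh df dg c1 c2 d x : R) :
  derivable_pt_lim h x dh -> derivable_pt_lim f x df -> derivable_pt_lim g x dg ->
  derivable_pt_lim (fun t => (c1 * (h t + t * f t) - c2 * g t) / d) x
    ((c1 * (dh + (f x + x * df)) - c2 * dg) / d).
Proof.
  intros Hh Hf Hg.
  apply (derivable_pt_lim_ext
    (minus_fct (mult_real_fct (c1 / d) (plus_fct h (mult_fct id f))) (mult_real_fct (c2 / d) g))).
  { intros t. unfold minus_fct, plus_fct, mult_real_fct, mult_fct, id, Rdiv. ring. }
  replace ((c1 * (dh + (f x + x * df)) - c2 * dg) / d)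
    with (c1 / d * (dh + (1 * f x + id x * df)) - c2 / d * dg) by (unfold id, Rdiv; ring).
  apply derivable_pt_lim_minus; apply derivable_pt_lim_scal; auto.
  apply derivable_pt_lim_plus; auto.
  apply derivable_pt_lim_mult; auto using derivable_pt_lim_id.
Qed.

Lemma derivable_pt_lim_one_minus_sqr (x : R) : derivable_pt_lim (fun t => 1 - t ^ 2) x (-2 * x).
Proof.
  replace (-2 * x) with (0 - INR 2 * x ^ Nat.pred 2) by (simpl; ring).
  apply (derivable_pt_lim_minus (fun _ => 1) (fun t => t ^ 2));
    [apply derivable_pt_lim_const | apply derivable_pt_lim_pow].
Qed.

Lemma Geg_derivable (a : R) (m : nat) (x : R) : derivable_pt_lim (Geg a m) x (dGeg a m x).
Proof.
  revert x. induction m as [| | m IH1 IH2] using nat_ind2; intros x.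
  - apply (derivable_pt_lim_ext (fun _ => 1)); [intros; now rewrite Geg_0 |].
    apply derivable_pt_lim_const.
  - apply (derivable_pt_lim_ext id); [intros; now rewrite Geg_1 |]. apply derivable_pt_lim_id.
  - apply (derivable_pt_lim_ext
      (fun t => (2 * (INR m + 1 + a) * (0 + t * Geg a (S m) t) - (INR m + 1) * Geg a m t)
                / (INR m + 1 + 2 * a))).
    { intros t. rewrite Geg_SS. unfold Rdiv; ring. }
    rewrite dGeg_SS. replace (Geg a (S m) x + x * dGeg a (S m) x)
      with (0 + (Geg a (S m) x + x * dGeg a (S m) x)) by ring.
    apply derivable_pt_lim_recurrence; auto. apply derivable_pt_lim_const.
Qed.

Lemma dGeg_derivable (a : R) (m : nat) (x : R) : derivable_pt_lim (dGeg a m) x (d2Geg a m x).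
Proof.
  revert x. induction m as [| | m IH1 IH2] using nat_ind2; intros x.
  - apply derivable_pt_lim_const.
  - apply derivable_pt_lim_const.
  - rewrite d2Geg_SS.
    replace (2 * dGeg a (S m) x + x * d2Geg a (S m) x)
      with (dGeg a (S m) x + (dGeg a (S m) x + x * d2Geg a (S m) x)) by ring.
    apply derivable_pt_lim_recurrence; auto using Geg_derivable.
Qed.

Lemma Geg_continuous (a : R) (m : nat) (t : R) : continuity_pt (Geg a m) t.
Proof. apply derivable_continuous_pt. exists (dGeg a m t). apply Geg_derivable. Qed.

Section DifferentialIdentities.
Variable a : R.
Hypothesis Ha : -1/2 < a.

Lemma dGeg_lower (m : nat) (x : R) :
  (1 - x ^ 2) * dGeg a (S m) x = INR (S m) * (Geg a m x - x * Geg a (S m) x).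
Proof.
  induction m as [| | m IH1 IH2] using nat_ind2.
  - simpl. rewrite Geg_0, Geg_1. ring.
  - rewrite dGeg_SS, Geg_SS. simpl dGeg. rewrite Geg_1, Geg_0.
    pose proof (Geg_denom_pos a Ha 0). simpl INR in *. field. lra.
  - pose proof (Geg_denom_pos a Ha m). pose proof (Geg_denom_pos a Ha (S m)).
    rewrite (dGeg_SS a (S m)), (Geg_SS a (S m)).
    replace ((1 - x ^ 2) * ((2 * (INR (S m) + 1 + a) * (Geg a (S (S m)) x + x * dGeg a (S (S m)) x)
               - (INR (S m) + 1) * dGeg a (S m) x) / (INR (S m) + 1 + 2 * a)))
      with ((2 * (INR (S m) + 1 + a) * ((1 - x ^ 2) * Geg a (S (S m)) x
               + x * ((1 - x ^ 2) * dGeg a (S (S m)) x))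
             - (INR (S m) + 1) * ((1 - x ^ 2) * dGeg a (S m) x)) / (INR (S m) + 1 + 2 * a))
      by (field; lra).
    rewrite IH1, IH2, !(Geg_SS a m). rewrite !S_INR in *. field. lra.
Qed.

Lemma dGeg_raise (m : nat) (x : R) :
  (1 - x ^ 2) * dGeg a m x = (INR m + 2 * a) * (x * Geg a m x - Geg a (S m) x).
Proof.
  destruct m as [| m]; [simpl; rewrite Geg_0, Geg_1; ring |].
  rewrite dGeg_lower, Geg_SS. pose proof (Geg_denom_pos a Ha m). rewrite S_INR. field. lra.
Qed.

Lemma dGeg_lower_deriv (m : nat) (x : R) :
  -2 * x * dGeg a (S m) x + (1 - x ^ 2) * d2Geg a (S m) x
  = INR (S m) * (dGeg a m x - (Geg a (S m) x + x * dGeg a (S m) x)).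
Proof.
  apply (uniqueness_limite (fun t => (1 - t ^ 2) * dGeg a (S m) t) x).
  - apply (derivable_pt_lim_mult (fun t => 1 - t ^ 2) (dGeg a (S m)));
      [apply derivable_pt_lim_one_minus_sqr | apply dGeg_derivable].
  - apply (derivable_pt_lim_ext
      (mult_real_fct (INR (S m)) (minus_fct (Geg a m) (mult_fct id (Geg a (S m)))))).
    { intros t. unfold mult_real_fct, minus_fct, mult_fct, id. symmetry. apply dGeg_lower. }
    replace (Geg a (S m) x + x * dGeg a (S m) x)
      with (1 * Geg a (S m) x + id x * dGeg a (S m) x) by (unfold id; ring).
    apply derivable_pt_lim_scal, derivable_pt_lim_minus; [apply Geg_derivable |].
    apply derivable_pt_lim_mult; [apply derivable_pt_lim_id | apply Geg_derivable].
Qed.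

Lemma Geg_ode (m : nat) (x : R) : x ^ 2 <> 1 ->
  (1 - x ^ 2) * d2Geg a (S m) x
  = (2 * a + 1) * x * dGeg a (S m) x - INR (S m) * (INR (S m) + 2 * a) * Geg a (S m) x.
Proof.
  intros Hx. apply (Rmult_eq_reg_l (1 - x ^ 2)); [| lra].
  transitivity ((1 - x ^ 2) * (-2 * x * dGeg a (S m) x + (1 - x ^ 2) * d2Geg a (S m) x)
                + 2 * x * ((1 - x ^ 2) * dGeg a (S m) x)); [ring |].
  rewrite dGeg_lower_deriv.
  transitivity (INR (S m) * ((1 - x ^ 2) * dGeg a m x - (1 - x ^ 2) * Geg a (S m) x
                 - x * ((1 - x ^ 2) * dGeg a (S m) x)) + 2 * x * ((1 - x ^ 2) * dGeg a (S m) x)); [ring |].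
  transitivity ((2 * a + 1) * x * ((1 - x ^ 2) * dGeg a (S m) x)
                - (1 - x ^ 2) * (INR (S m) * (INR (S m) + 2 * a) * Geg a (S m) x)); [| ring].
  rewrite dGeg_raise, dGeg_lower, S_INR. ring.
Qed.

End DifferentialIdentities.


(** * Sup-norm bounds on [[-1, 1]] *)

Lemma le_of_derive_nonneg (f f' : R -> R) (x y : R) : x <= y ->
  (forall c, x <= c <= y -> derivable_pt_lim f c (f' c)) ->
  (forall c, x < c < y -> 0 <= f' c) -> f x <= f y.
Proof.
  intros [Hxy | <-] Hd Hs; [| lra].
  destruct (MVT_cor2 f f' x y Hxy Hd) as [c [E Hc]].
  assert (0 <= f' c * (y - x)) by (apply Rmult_le_pos; [apply Hs; auto | lra]). lra.
Qed.

Lemma ge_of_derive_nonpos (f f' : R -> R) (x y : R) : x <= y ->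
  (forall c, x <= c <= y -> derivable_pt_lim f c (f' c)) ->
  (forall c, x < c < y -> f' c <= 0) -> f y <= f x.
Proof.
  intros Hxy Hd Hs.
  enough (- f x <= - f y) by lra.
  apply (le_of_derive_nonneg (fun t => - f t) (fun t => - f' t)); auto.
  - intros c Hc. exact (derivable_pt_lim_opp f c (f' c) (Hd c Hc)).
  - intros c Hc. specialize (Hs c Hc). lra.
Qed.

Section Sonine.
Variable a : R.
Hypothesis Ha : -1/2 < a.
Variable m : nat.

Let N := S m.
Let c := INR N * (INR N + 2 * a).

Lemma sonine_const_pos : 0 < c.
Proof. unfold c, N. rewrite S_INR. pose proof (pos_INR m). apply Rmult_lt_0_compat; lra. Qed.

Definition sonine (t : R) : R := Geg a N t ^ 2 + (1 - t ^ 2) * dGeg a N t ^ 2 / c.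

Definition sonine_deriv (t : R) : R := 2 * Geg a N t * dGeg a N t +
  (-2 * t * dGeg a N t ^ 2 + (1 - t ^ 2) * (2 * dGeg a N t * d2Geg a N t)) / c.

Lemma sonine_derivable (t : R) : derivable_pt_lim sonine t (sonine_deriv t).
Proof.
  apply (derivable_pt_lim_ext (plus_fct (mult_fct (Geg a N) (Geg a N))
     (mult_real_fct (/ c) (mult_fct (fun t => 1 - t ^ 2) (mult_fct (dGeg a N) (dGeg a N)))))).
  { intros s. unfold sonine, plus_fct, mult_fct, mult_real_fct, Rdiv. ring. }
  replace (sonine_deriv t) with
    ((dGeg a N t * Geg a N t + Geg a N t * dGeg a N t) +
     / c * (-2 * t * (dGeg a N t * dGeg a N t)
            + (1 - t ^ 2) * (d2Geg a N t * dGeg a N t + dGeg a N t * d2Geg a N t)))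
    by (unfold sonine_deriv, Rdiv; ring).
  apply derivable_pt_lim_plus; [apply derivable_pt_lim_mult; apply Geg_derivable |].
  apply derivable_pt_lim_scal.
  apply (derivable_pt_lim_mult (fun t => 1 - t ^ 2) (mult_fct (dGeg a N) (dGeg a N)));
    [apply derivable_pt_lim_one_minus_sqr |].
  apply derivable_pt_lim_mult; apply dGeg_derivable.
Qed.

Lemma sonine_deriv_eq (t : R) : -1 < t < 1 -> sonine_deriv t = 4 * a * t * dGeg a N t ^ 2 / c.
Proof.
  intros Ht. pose proof sonine_const_pos.
  assert (E := Geg_ode a Ha m t ltac:(nra)). fold N in E.
  unfold sonine_deriv.
  replace ((1 - t ^ 2) * (2 * dGeg a N t * d2Geg a N t))
    with (2 * dGeg a N t * ((1 - t ^ 2) * d2Geg a N t)) by ring.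
  rewrite E. unfold c. field. unfold N. rewrite S_INR. pose proof (pos_INR m). lra.
Qed.

Lemma sonine_deriv_factor (t : R) : -1 < t < 1 ->
  exists q, 0 <= q /\ sonine_deriv t = a * t * q.
Proof.
  intros Ht. exists (4 * dGeg a N t ^ 2 / c). pose proof sonine_const_pos. split.
  - apply Rmult_le_pos; [pose proof (pow2_ge_0 (dGeg a N t)); lra |].
    left; now apply Rinv_0_lt_compat.
  - rewrite sonine_deriv_eq by auto. unfold Rdiv. ring.
Qed.

Lemma Geg_sqr_le_sonine (t : R) : -1 <= t <= 1 -> Geg a N t ^ 2 <= sonine t.
Proof.
  intros Ht. unfold sonine. pose proof sonine_const_pos.
  assert (0 <= (1 - t ^ 2) * dGeg a N t ^ 2 / c); [| lra].
  apply Rmult_le_pos; [| left; now apply Rinv_0_lt_compat].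
  apply Rmult_le_pos; [nra | apply pow2_ge_0].
Qed.

Lemma sonine_at_pm1 : sonine 1 = 1 /\ sonine (-1) = 1.
Proof.
  pose proof sonine_const_pos. unfold sonine. replace (-1) with (- (1)) by ring.
  rewrite Geg_opp, Geg_at_1, Rmult_1_r, neg1_pow_sqr, pow1 by auto. split; field; lra.
Qed.

Lemma Geg_sqr_le_1 (t : R) : 0 <= a -> -1 <= t <= 1 -> Geg a N t ^ 2 <= 1.
Proof.
  intros Ha0 Ht. eapply Rle_trans; [apply Geg_sqr_le_sonine; auto |].
  destruct sonine_at_pm1 as [E1 Em1]. destruct (Rle_dec 0 t).
  - rewrite <- E1. apply (le_of_derive_nonneg sonine sonine_deriv); [lra | intros; apply sonine_derivable |].
    intros s Hs. destruct (sonine_deriv_factor s ltac:(lra)) as [q [Hq ->]].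
    apply Rmult_le_pos; [apply Rmult_le_pos |]; lra.
  - rewrite <- Em1. apply (ge_of_derive_nonpos sonine sonine_deriv); [lra | intros; apply sonine_derivable |].
    intros s Hs. destruct (sonine_deriv_factor s ltac:(lra)) as [q [Hq ->]].
    assert (0 <= a * - s * q) by (apply Rmult_le_pos; [apply Rmult_le_pos |]; lra). lra.
Qed.

Lemma Geg_sqr_le_sonine_0 (t : R) : a < 0 -> -1 <= t <= 1 ->
  Geg a N t ^ 2 <= Geg a N 0 ^ 2 + dGeg a N 0 ^ 2 / c.
Proof.
  intros Ha0 Ht. eapply Rle_trans; [apply Geg_sqr_le_sonine; auto |].
  replace (Geg a N 0 ^ 2 + dGeg a N 0 ^ 2 / c) with (sonine 0)
    by (unfold sonine; field; apply Rgt_not_eq, sonine_const_pos).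
  destruct (Rle_dec 0 t).
  - apply (ge_of_derive_nonpos sonine sonine_deriv); [lra | intros; apply sonine_derivable |].
    intros s Hs. destruct (sonine_deriv_factor s ltac:(lra)) as [q [Hq ->]].
    assert (0 <= - a * s * q) by (apply Rmult_le_pos; [apply Rmult_le_pos |]; lra). lra.
  - apply (le_of_derive_nonneg sonine sonine_deriv); [lra | intros; apply sonine_derivable |].
    intros s Hs. destruct (sonine_deriv_factor s ltac:(lra)) as [q [Hq ->]].
    assert (0 <= - a * - s * q) by (apply Rmult_le_pos; [apply Rmult_le_pos |]; lra). lra.
Qed.

End Sonine.


Section CentralValues.
Variable a : R.
Hypothesis Ha : -1/2 < a.

(* [prod_(j<k) (2j+1) / (2j+1+2a)], which is [|G_(2k)(0)|]. *)
Definition Gcenter (k : nat) : R := ratio_prod (-1/2) (a - 1/2) k.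

Lemma Gcenter_pos (k : nat) : 0 < Gcenter k.
Proof. apply ratio_prod_pos; lra. Qed.

Lemma Geg_at_0 (k : nat) : Geg a (2 * k) 0 = (-1) ^ k * Gcenter k /\ Geg a (2 * k + 1) 0 = 0.
Proof.
  induction k as [| k [IH1 IH2]].
  { simpl. rewrite Geg_0, Geg_1. unfold Gcenter, ratio_prod. simpl. split; ring. }
  replace (2 * S k)%nat with (S (S (2 * k))) by lia.
  replace (S (S (2 * k)) + 1)%nat with (S (S (2 * k + 1))) by lia.
  rewrite !Geg_SS. replace (S (2 * k)) with (2 * k + 1)%nat by lia.
  rewrite IH1, IH2. pose proof (Geg_denom_pos a Ha (2 * k)).
  split; [| unfold Rdiv; ring].
  unfold Gcenter, ratio_prod. simpl prodn. fold (ratio_prod (-1/2) (a - 1/2) k).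
  rewrite mult_INR in *. simpl INR in *. pose proof (pos_INR k).
  change ((-1) ^ S k) with (-1 * (-1) ^ k). field. lra.
Qed.

Lemma Geg_abs_le_1 (n : nat) (t : R) : 0 <= a -> -1 <= t <= 1 -> Rabs (Geg a (S n) t) <= 1.
Proof.
  intros Ha0 Ht. apply Rabs_le_of_sqr_le; [lra |]. rewrite pow1. now apply Geg_sqr_le_1.
Qed.

Lemma Geg_even_abs_le_center (k : nat) (t : R) : a < 0 -> -1 <= t <= 1 ->
  Rabs (Geg a (S (2 * k + 1)) t) <= Gcenter (S k).
Proof.
  intros Hneg Ht. apply Rabs_le_of_sqr_le; [left; apply Gcenter_pos |].
  eapply Rle_trans; [apply Geg_sqr_le_sonine_0; auto |].
  pose proof (dGeg_lower a Ha (2 * k + 1) 0) as P.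
  destruct (Geg_at_0 k) as [_ E0]. destruct (Geg_at_0 (S k)) as [E1 _].
  replace (2 * S k)%nat with (S (2 * k + 1)) in E1 by lia.
  rewrite E0 in P. rewrite E1, Rpow_mult_distr, neg1_pow_sqr.
  replace (dGeg a (S (2 * k + 1)) 0) with ((1 - 0 ^ 2) * dGeg a (S (2 * k + 1)) 0) by ring.
  rewrite P.
  right. unfold Rdiv. ring.
Qed.

Lemma Geg_odd_center_bound_pos (k : nat) :
  0 < (INR (2 * k) + 1) * Gcenter k / sqrt ((INR (2 * k) + 1) * (2 * a + INR (2 * k) + 1)).
Proof.
  pose proof (pos_INR (2 * k)). pose proof (Gcenter_pos k).
  apply Rdiv_lt_0_compat; [nra | apply sqrt_lt_R0; nra].
Qed.

Lemma Geg_odd_abs_le_center (k : nat) (t : R) : a < 0 -> -1 <= t <= 1 ->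
  Rabs (Geg a (S (2 * k)) t)
  <= (INR (2 * k) + 1) * Gcenter k / sqrt ((INR (2 * k) + 1) * (2 * a + INR (2 * k) + 1)).
Proof.
  intros Hneg Ht. pose proof (pos_INR (2 * k)). pose proof (Gcenter_pos k).
  assert (Hq : 0 < (INR (2 * k) + 1) * (2 * a + INR (2 * k) + 1)) by (apply Rmult_lt_0_compat; lra).
  pose proof (sqrt_lt_R0 _ Hq).
  apply Rabs_le_of_sqr_le; [left; apply Geg_odd_center_bound_pos |].
  eapply Rle_trans; [apply Geg_sqr_le_sonine_0; auto |].
  destruct (Geg_at_0 k) as [E1 E2].
  pose proof (dGeg_lower a Ha (2 * k) 0) as P.
  replace (S (2 * k)) with (2 * k + 1)%nat in * by lia.
  rewrite E1, E2 in *.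
  replace (dGeg a (2 * k + 1) 0) with ((1 - 0 ^ 2) * dGeg a (2 * k + 1) 0) by ring.
  rewrite P.
  set (Q := (INR (2 * k) + 1) * (2 * a + INR (2 * k) + 1)) in *.
  assert (Esq : ((INR (2 * k) + 1) * Gcenter k / sqrt Q) ^ 2
                = (INR (2 * k) + 1) ^ 2 * Gcenter k ^ 2 / Q).
  { unfold Rdiv. rewrite !Rpow_mult_distr, pow_inv, <- (Rsqr_pow2 (sqrt Q)), Rsqr_sqrt by lra.
    reflexivity. }
  rewrite Esq. right. unfold Q. rewrite plus_INR. change (INR 1) with 1.
  replace (((-1) ^ k * Gcenter k - 0 * 0)) with ((-1) ^ k * Gcenter k) by ring.
  rewrite !Rpow_mult_distr, neg1_pow_sqr. field. lra.
Qed.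

End CentralValues.


(** * The leading coefficient and the closed forms of the bounds *)

Section LeadingCoefficient.
Variable a : R.
Hypothesis Ha : -1/2 < a.

Lemma Klead_ratio_prod (n : nat) : Klead a (S n) = 2 ^ n * ratio_prod a (2 * a) n.
Proof.
  induction n as [| n IH]; [unfold Klead, Gcoef, ratio_prod; simpl; ring |].
  unfold Klead in *. rewrite Gcoef_SS, (Gcoef_above_degree a n (S (S n))) by lia.
  rewrite IH. unfold ratio_prod. simpl prodn. simpl pow.
  pose proof (Geg_denom_pos a Ha n). field. lra.
Qed.

Lemma Klead_pos (n : nat) : 0 < Klead a (S n).
Proof. rewrite Klead_ratio_prod. apply Rmult_lt_0_compat; [apply pow_lt | apply ratio_prod_pos]; lra. Qed.

Lemma Klead_pochhammer (n : nat) :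
  Klead a (S n) = 2 ^ n * pochhammer (a + 1) n / pochhammer (2 * a + 1) n.
Proof.
  rewrite Klead_ratio_prod. unfold Rdiv. rewrite Rmult_assoc. f_equal.
  induction n as [| n IH]; [unfold ratio_prod, pochhammer; simpl; field |].
  unfold ratio_prod in *. rewrite prodn_S, IH, !pochhammer_S.
  pose proof (pochhammer_pos (2 * a + 1) n ltac:(lra)). pose proof (pos_INR n). field. lra.
Qed.

(* Legendre's duplication formula in product form: split [(2k)!] and [(2a+1)_(2k)] into factors
   of odd and even index. *)
Lemma Gcenter_duplication (k : nat) :
  Gcenter a k * pochhammer (2 * a + 1) (2 * k) / INR (fact (2 * k))
  = pochhammer (a + 1) k / INR (fact k).
Proof.
  induction k as [| k IH]; [unfold Gcenter, ratio_prod, pochhammer; simpl; field |].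
  replace (2 * S k)%nat with (S (S (2 * k))) by lia.
  pose proof (INR_fact_lt_0 (2 * k)). pose proof (INR_fact_lt_0 k).
  pose proof (Gcenter_pos a Ha k). pose proof (pos_INR k).
  assert (E : pochhammer (2 * a + 1) (2 * k)
              = pochhammer (a + 1) k / INR (fact k) * INR (fact (2 * k)) / Gcenter a k).
  { rewrite <- IH. field. lra. }
  rewrite !pochhammer_S, E. unfold Gcenter, ratio_prod in *. rewrite prodn_S.
  rewrite !fact_simpl, !mult_INR, !S_INR, mult_INR. change (INR 0) with 0. change (INR 2) with 2.
  field. repeat split; lra.
Qed.

Lemma Gamma_a1_pos : 0 < Gamma (a + 1).
Proof. apply Gamma_pos; lra. Qed.

Lemma Gamma_2a1_pos : 0 < Gamma (2 * a + 1).
Proof. apply Gamma_pos; lra. Qed.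

Lemma explicit_bound_i_eq (n : nat) (A x : R) :
  A * (/ 2) ^ n * (x + 1) * Gamma (a + 1) * Gamma (INR n + 2 * a + 1)
    / (Gamma (2 * a + 1) * Gamma (INR n + 2) * Gamma (INR n + a + 1))
  = A * (x + 1) * 1 / (INR (fact (S n)) * Klead a (S n)).
Proof.
  replace (INR n + 2 * a + 1) with (2 * a + 1 + INR n) by ring.
  replace (INR n + a + 1) with (a + 1 + INR n) by ring.
  replace (INR n + 2) with (INR (S n) + 1) by (rewrite S_INR; ring).
  rewrite Gamma_nat, !Gamma_add_nat, Klead_pochhammer by lra.
  pose proof Gamma_a1_pos. pose proof Gamma_2a1_pos. pose proof (INR_fact_lt_0 (S n)).
  pose proof (pochhammer_pos (a + 1) n ltac:(lra)). pose proof (pochhammer_pos (2 * a + 1) n ltac:(lra)).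
  pose proof (pow_lt 2 n ltac:(lra)).
  rewrite pow_inv. field. repeat split; lra.
Qed.

Hypothesis Hneg : a < 0.

Lemma explicit_bound_ii_eq (k : nat) (A x : R) :
  A * (/ 2) ^ (S (2 * k + 1)) * (x + 1) * Gamma a / Gamma (INR (2 * k + 1) + a + 1)
    * binomR ((INR (2 * k + 1) - 1) / 2 + a) ((INR (2 * k + 1) + 1) / 2)
  = A * (x + 1) * Gcenter a (S k) / (INR (fact (S (2 * k + 1))) * Klead a (S (2 * k + 1))).
Proof.
  set (n := (2 * k + 1)%nat).
  assert (Hn : INR n = 2 * INR k + 1) by (unfold n; rewrite plus_INR, mult_INR; simpl; ring).
  unfold binomR.
  replace ((INR n - 1) / 2 + a + 1) with (a + 1 + INR k) by (rewrite Hn; field).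
  replace ((INR n + 1) / 2 + 1) with (INR (S k) + 1) by (rewrite Hn, S_INR; field).
  replace ((INR n - 1) / 2 + a - (INR n + 1) / 2 + 1) with a by (rewrite Hn; field).
  replace (INR n + a + 1) with (a + 1 + INR n) by ring.
  rewrite Gamma_nat, !Gamma_add_nat, Klead_pochhammer by lra.
  assert (E : Gcenter a (S k)
              = pochhammer (a + 1) k / (2 * INR (fact (S k))) * INR (fact (S n)) / pochhammer (2 * a + 1) n).
  { pose proof (INR_fact_lt_0 (2 * k)). pose proof (INR_fact_lt_0 k).
    pose proof (pochhammer_pos (2 * a + 1) (2 * k) ltac:(lra)). pose proof (pos_INR k).
    assert (Pk : pochhammer (a + 1) k
                 = Gcenter a k * pochhammer (2 * a + 1) (2 * k) / INR (fact (2 * k)) * INR (fact k))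
      by (rewrite Gcenter_duplication; field; lra).
    rewrite Pk. unfold n.
    replace (S (2 * k + 1)) with (S (S (2 * k))) by lia.
    replace (2 * k + 1)%nat with (S (2 * k)) by lia.
    rewrite pochhammer_S. unfold Gcenter, ratio_prod. rewrite prodn_S.
    rewrite !fact_simpl, !mult_INR, !S_INR, mult_INR. change (INR 0) with 0. change (INR 2) with 2.
    field. repeat split; lra. }
  rewrite E. pose proof (Gamma_succ a ltac:(lra) ltac:(lra)) as Ga.
  pose proof Gamma_a1_pos. pose proof (INR_fact_lt_0 (S n)). pose proof (INR_fact_lt_0 (S k)).
  pose proof (pochhammer_pos (a + 1) n ltac:(lra)). pose proof (pochhammer_pos (a + 1) k ltac:(lra)).
  pose proof (pochhammer_pos (2 * a + 1) n ltac:(lra)). pose proof (pow_lt 2 n ltac:(lra)).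
  assert (Gamma a <> 0) by (intro Z; rewrite Z in Ga; lra).
  rewrite pow_inv. simpl pow. field. repeat split; lra.
Qed.

Lemma explicit_bound_iii_eq (k : nat) (A x : R) :
  A * (/ 2) ^ (2 * k) * (x + 1) * Gamma (a + 1)
     / (sqrt ((INR (2 * k) + 1) * (2 * a + INR (2 * k) + 1)) * Gamma (INR (2 * k) + a + 1))
     * binomR (INR (2 * k) / 2 + a) (INR (2 * k) / 2)
  = A * (x + 1)
    * ((INR (2 * k) + 1) * Gcenter a k / sqrt ((INR (2 * k) + 1) * (2 * a + INR (2 * k) + 1)))
    / (INR (fact (S (2 * k))) * Klead a (S (2 * k))).
Proof.
  set (n := (2 * k)%nat).
  assert (Hn : INR n = 2 * INR k) by (unfold n; rewrite mult_INR; simpl; ring).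
  unfold binomR.
  replace (INR n / 2 + a + 1) with (a + 1 + INR k) by (rewrite Hn; field).
  replace (INR n / 2 + 1) with (INR k + 1) by (rewrite Hn; field).
  replace (INR n / 2 + a - INR n / 2 + 1) with (a + 1) by field.
  replace (INR n + a + 1) with (a + 1 + INR n) by ring.
  rewrite Gamma_nat, !Gamma_add_nat, Klead_pochhammer by lra.
  assert (E : Gcenter a k = pochhammer (a + 1) k / INR (fact k) * INR (fact n) / pochhammer (2 * a + 1) n).
  { rewrite <- Gcenter_duplication. fold n. pose proof (INR_fact_lt_0 n).
    pose proof (pochhammer_pos (2 * a + 1) n ltac:(lra)). field. lra. }
  rewrite E, (fact_simpl n), mult_INR, S_INR.
  assert (Hq : 0 < (INR n + 1) * (2 * a + INR n + 1)) by (pose proof (pos_INR n); nra).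
  pose proof (sqrt_lt_R0 _ Hq).
  pose proof Gamma_a1_pos. pose proof (INR_fact_lt_0 n). pose proof (INR_fact_lt_0 k).
  pose proof (pochhammer_pos (a + 1) n ltac:(lra)). pose proof (pochhammer_pos (a + 1) k ltac:(lra)).
  pose proof (pochhammer_pos (2 * a + 1) n ltac:(lra)). pose proof (pos_INR n).
  pose proof (pow_lt 2 n ltac:(lra)).
  rewrite pow_inv. field. repeat split; lra.
Qed.

End LeadingCoefficient.


(** * Bounds on the truncation error *)

Section ErrorBounds.
Variable a : R.
Hypothesis Ha : -1/2 < a.

Lemma Eerr_abs_eq (n : nat) (fd : nat -> R -> R) (x zeta : R) :
  Rabs (Eerr a n fd x zeta)
  = Rabs (fd (S n) zeta) * Rabs (Rint (Geg a (S n)) (-1) x) / (INR (fact (S n)) * Klead a (S n)).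
Proof.
  pose proof (Klead_pos a Ha n). pose proof (INR_fact_lt_0 (S n)).
  unfold Eerr, Rdiv. rewrite !Rabs_mult, Rabs_inv, (Rabs_right (_ * Klead a (S n))) by nra. ring.
Qed.

Lemma Eerr_abs_le (n : nat) (fd : nat -> R -> R) (x zeta A M : R) :
  Rabs (fd (S n) zeta) <= A -> Geg a (S n) x = 0 ->
  (forall t, -1 <= t <= 1 -> Rabs (Geg a (S n) t) <= M) ->
  Rabs (Eerr a n fd x zeta) <= A * (x + 1) * M / (INR (fact (S n)) * Klead a (S n)).
Proof.
  intros HA Hx HM. destruct (Geg_root_in a Ha n x Hx) as [X1 X2].
  pose proof (Klead_pos a Ha n). pose proof (INR_fact_lt_0 (S n)).
  assert (HI : Rabs (Rint (Geg a (S n)) (-1) x) <= M * (x - -1)).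
  { apply Rint_abs_le; [lra | intros; apply Geg_continuous | intros t Ht; apply HM; lra]. }
  rewrite Eerr_abs_eq. unfold Rdiv. apply Rmult_le_compat_r; [left; apply Rinv_0_lt_compat; nra |].
  replace (A * (x + 1) * M) with (A * (M * (x - -1))) by ring.
  apply Rmult_le_compat; auto using Rabs_pos.
Qed.

Lemma Eerr_abs_lt (n : nat) (fd : nat -> R -> R) (x zeta A M : R) : 0 < A -> 0 < M ->
  Rabs (fd (S n) zeta) <= A -> Geg a (S n) x = 0 ->
  (forall t, -1 <= t <= 1 -> Rabs (Geg a (S n) t) <= M) ->
  Rabs (Eerr a n fd x zeta) < A * (x + 1) * M / (INR (fact (S n)) * Klead a (S n)).
Proof.
  intros HA0 HM0 HA Hx HM. destruct (Geg_root_in a Ha n x Hx) as [X1 X2].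
  pose proof (Klead_pos a Ha n). pose proof (INR_fact_lt_0 (S n)).
  assert (HI : Rabs (Rint (Geg a (S n)) (-1) x) < M * (x - -1)).
  { apply Rint_abs_lt; [lra | exact HM0 | exact Hx | intros; apply Geg_continuous | intros t Ht; apply HM; lra]. }
  rewrite Eerr_abs_eq. unfold Rdiv. apply Rmult_lt_compat_r; [apply Rinv_0_lt_compat; nra |].
  replace (A * (x + 1) * M) with (A * (M * (x - -1))) by ring.
  pose proof (Rabs_pos (Rint (Geg a (S n)) (-1) x)).
  apply Rle_lt_trans with (A * Rabs (Rint (Geg a (S n)) (-1) x)); [apply Rmult_le_compat_r; lra |].
  apply Rmult_lt_compat_l; lra.
Qed.

(* [(n+1)! >= n^(n+3/2) e^(-n)] by Stirling, and [K_(n+1) = 2^n * ratio_prod a (2a) n >= 2^n L n^(-a)]. *)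
Lemma inv_fact_Klead_le (L : R) (n : nat) : (1 <= n)%nat -> 0 < L ->
  L <= Rpower (INR n) a * ratio_prod a (2 * a) n ->
  / (INR (fact (S n)) * Klead a (S n))
  <= / L * (exp 1 / 2) ^ n * Rpower (INR n) (a - INR n - 3 / 2).
Proof.
  intros Hn HL HP. pose proof (INR_gt0 n Hn). rewrite Klead_ratio_prod by auto.
  pose proof (pow_lt 2 n ltac:(lra)).
  assert (0 < Rpower (INR n) (INR n + / 2)) by apply exp_pos.
  assert (0 < Rpower (INR n) a) by apply exp_pos.
  pose proof (exp_pos (INR n)).
  set (Fl := INR n * Rpower (INR n) (INR n + / 2) * / exp (INR n)).
  assert (HS0 : 0 < Fl) by (unfold Fl; apply Rmult_lt_0_compat; [nra | now apply Rinv_0_lt_compat]).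
  assert (HS : Fl <= INR (fact (S n))).
  { pose proof (stirling_lower n Hn) as St. rewrite exp_Ropp in St.
    rewrite fact_simpl, mult_INR, S_INR. unfold Fl. pose proof (INR_fact_lt_0 n). nra. }
  assert (Hr : L / Rpower (INR n) a <= ratio_prod a (2 * a) n).
  { apply (Rmult_le_reg_l (Rpower (INR n) a)); auto. unfold Rdiv.
    rewrite Rmult_comm, Rmult_assoc, Rinv_l, Rmult_1_r; lra. }
  assert (E : / L * (exp 1 / 2) ^ n * Rpower (INR n) (a - INR n - 3 / 2)
              = / (Fl * (2 ^ n * (L / Rpower (INR n) a)))).
  { assert (Ee : exp 1 ^ n = exp (INR n)).
    { rewrite <- Rpower_pow by apply exp_pos. unfold Rpower. now rewrite ln_exp, Rmult_1_r. }
    replace (a - INR n - 3 / 2) with (a + - (1 + (INR n + / 2))) by field.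
    rewrite Rpower_plus, Rpower_Ropp, Rpower_plus, Rpower_1 by lra.
    unfold Rdiv. rewrite Rpow_mult_distr, Ee, pow_inv. unfold Fl. field. repeat split; lra. }
  rewrite E. apply Rinv_le_contravar.
  - apply Rmult_lt_0_compat; [auto | apply Rmult_lt_0_compat; [lra | apply Rdiv_lt_0_compat; lra]].
  - apply Rmult_le_compat; [lra | left; apply Rmult_lt_0_compat; [lra | apply Rdiv_lt_0_compat; lra] | auto |].
    apply Rmult_le_compat_l; lra.
Qed.

Lemma div_sqrt_le_inv (p : R) : 1 <= p -> a < 0 -> p / sqrt (p * (2 * a + p)) <= / (1 + 2 * a).
Proof.
  intros Hp Hneg.
  assert (Hq : 0 < p * (2 * a + p)) by (apply Rmult_lt_0_compat; lra).
  assert (S1 : p * (1 + 2 * a) <= sqrt (p * (2 * a + p))).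
  { rewrite <- (sqrt_pow2 (p * (1 + 2 * a))) by (apply Rmult_le_pos; lra).
    apply sqrt_le_1_alt.
    assert ((1 + 2 * a) ^ 2 <= 1 + 2 * a) by nra.
    assert (p * p * (1 + 2 * a) <= p * (2 * a + p)).
    { assert (0 <= (- a) * (p * (p - 1))) by (apply Rmult_le_pos; nra). nra. }
    assert (p ^ 2 * (1 + 2 * a) ^ 2 <= p ^ 2 * (1 + 2 * a)) by (apply Rmult_le_compat_l; nra).
    replace ((p * (1 + 2 * a)) ^ 2) with (p ^ 2 * (1 + 2 * a) ^ 2) by ring. nra. }
  pose proof (sqrt_lt_R0 _ Hq).
  apply (Rmult_le_reg_r (sqrt (p * (2 * a + p)) * (1 + 2 * a))); [apply Rmult_lt_0_compat; lra |].
  unfold Rdiv. replace (p * / sqrt (p * (2 * a + p)) * (sqrt (p * (2 * a + p)) * (1 + 2 * a)))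
    with (p * (1 + 2 * a)) by (field; lra).
  replace (/ (1 + 2 * a) * (sqrt (p * (2 * a + p)) * (1 + 2 * a))) with (sqrt (p * (2 * a + p)))
    by (field; lra).
  exact S1.
Qed.

Lemma Geg_abs_le_neg_alpha : exists D, 0 < D /\ (a < 0 ->
  forall n t, (1 <= n)%nat -> -1 <= t <= 1 -> Rabs (Geg a (S n) t) <= D * Rpower (INR n) (- a)).
Proof.
  destruct (ratio_prod_bounds (-1/2) (a - 1/2) ltac:(lra) ltac:(lra)) as [L [U [_ [HU HUb]]]].
  replace (a - 1/2 - -1/2) with a in HUb by field.
  exists (U / (1 + 2 * a)). split; [apply Rdiv_lt_0_compat; lra |]. intros Hneg n t Hn Ht.
  assert (Hc : forall k m, (1 <= k)%nat -> (k <= m)%nat -> Gcenter a k <= U * Rpower (INR m) (- a)).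
  { intros k m Hk Hkm. destruct (HUb k Hk) as [_ Hk'].
    pose proof (INR_gt0 k Hk).
    assert (Gcenter a k <= U * Rpower (INR k) (- a)).
    { apply (Rmult_le_reg_l (Rpower (INR k) a)); [apply exp_pos |].
      rewrite <- Rmult_assoc, (Rmult_comm _ U), Rmult_assoc, <- Rpower_plus.
      rewrite Rplus_opp_r, Rpower_O by lra. unfold Gcenter. lra. }
    eapply Rle_trans; [eassumption |]. apply Rmult_le_compat_l; [lra |].
    apply Rle_Rpower_l; [lra | split; [lra | apply le_INR; lia]]. }
  assert (HU2 : U <= U / (1 + 2 * a)).
  { apply (Rmult_le_reg_r (1 + 2 * a)); [lra |]. unfold Rdiv. rewrite Rmult_assoc, Rinv_l by lra. nra. }
  pose proof (exp_pos (- a * ln (INR n))) as Hpow. fold (Rpower (INR n) (- a)) in Hpow.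
  destruct (Nat.Even_or_Odd n) as [[k ->] | [k ->]].
  - eapply Rle_trans; [apply Geg_odd_abs_le_center; auto |].
    pose proof (pos_INR (2 * k)). pose proof (Gcenter_pos a Ha k).
    eapply Rle_trans.
    { replace (2 * a + INR (2 * k) + 1) with (2 * a + (INR (2 * k) + 1)) by ring.
      unfold Rdiv. rewrite Rmult_comm, <- Rmult_assoc, (Rmult_comm _ (INR (2 * k) + 1)).
      apply Rmult_le_compat_r; [lra | apply div_sqrt_le_inv; lra]. }
    replace (U / (1 + 2 * a) * Rpower (INR (2 * k)) (- a))
      with (/ (1 + 2 * a) * (U * Rpower (INR (2 * k)) (- a))) by (field; lra).
    apply Rmult_le_compat_l; [left; apply Rinv_0_lt_compat; lra | apply Hc; lia].
  - eapply Rle_trans; [apply Geg_even_abs_le_center; auto |].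
    eapply Rle_trans; [apply (Hc (S k) (2 * k + 1)%nat); lia |]. apply Rmult_le_compat_r; lra.
Qed.

Lemma Eerr_asymptotic_bound : exists D1, 0 < D1 /\
  forall n (fd : nat -> R -> R) x zeta A M, (1 <= n)%nat ->
  Rabs (fd (S n) zeta) <= A -> Geg a (S n) x = 0 ->
  (forall t, -1 <= t <= 1 -> Rabs (Geg a (S n) t) <= M) ->
  Rabs (Eerr a n fd x zeta)
  <= A * D1 * M * (exp 1 / 2) ^ n * (x + 1) * Rpower (INR n) (a - INR n - 3 / 2).
Proof.
  destruct (ratio_prod_bounds a (2 * a) ltac:(lra) ltac:(lra)) as [L [U [HL [_ HLb]]]].
  replace (2 * a - a) with a in HLb by ring.
  exists (/ L). split; [now apply Rinv_0_lt_compat |]. intros n fd x zeta A M Hn HA Hx HM.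
  destruct (Geg_root_in a Ha n x Hx) as [X1 X2].
  eapply Rle_trans; [apply Eerr_abs_le; eauto |].
  replace (A * / L * M * (exp 1 / 2) ^ n * (x + 1) * Rpower (INR n) (a - INR n - 3 / 2))
    with (A * (x + 1) * M * (/ L * (exp 1 / 2) ^ n * Rpower (INR n) (a - INR n - 3 / 2))) by ring.
  unfold Rdiv. apply Rmult_le_compat_l; [| apply inv_fact_Klead_le; auto; apply HLb, Hn].
  pose proof (HM x ltac:(lra)). pose proof (Rabs_pos (Geg a (S n) x)).
  pose proof (Rabs_pos (fd (S n) zeta)).
  apply Rmult_le_pos; [apply Rmult_le_pos |]; lra.
Qed.

Lemma asymptotic_rate_pos (n : nat) (x p : R) : -1 < x ->
  0 < (exp 1 / 2) ^ n * (x + 1) * Rpower (INR n) p.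
Proof.
  intros Hx. pose proof (exp_pos 1).
  apply Rmult_lt_0_compat; [apply Rmult_lt_0_compat; [apply pow_lt |] | apply exp_pos]; lra.
Qed.

End ErrorBounds.

Theorem theorem4 (a : R) (Ha : -1/2 < a) (A : R) (HA : 0 < A) :
  exists D1 D2 : R, 0 < D1 /\ 0 < D2 /\
  (* explicit bounds, for every n, every f in C^{n+1}[-1,1] with
     |f^{(n+1)}| <= A, every GG node x (zero of G_{n+1}), every zeta *)
  (forall (n : nat) (f : R -> R) (fd : nat -> R -> R),
     derivs_C (S n) f fd ->
     (forall y, Icc y -> Rabs (fd (S n) y) <= A) ->
     forall x, Geg a (S n) x = 0 ->
     forall zeta, Icc zeta ->
       (0 <= a ->
          Rabs (Eerr a n fd x zeta) <=
          A * (/ 2) ^ n * (x + 1) * Gamma (a + 1) * Gamma (INR n + 2 * a + 1)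
          / (Gamma (2 * a + 1) * Gamma (INR n + 2) * Gamma (INR n + a + 1))) /\
       ((exists m : nat, n = (2 * m + 1)%nat) -> a < 0 ->
          Rabs (Eerr a n fd x zeta) <=
          A * (/ 2) ^ (S n) * (x + 1) * Gamma a / Gamma (INR n + a + 1)
          * binomR ((INR n - 1) / 2 + a) ((INR n + 1) / 2)) /\
       ((exists m : nat, n = (2 * m)%nat) -> a < 0 ->
          Rabs (Eerr a n fd x zeta) <
          A * (/ 2) ^ n * (x + 1) * Gamma (a + 1)
          / (sqrt ((INR n + 1) * (2 * a + INR n + 1)) * Gamma (INR n + a + 1))
          * binomR (INR n / 2 + a) (INR n / 2))) /\
  (* asymptotic bounds: |E| <= (1 + o(1)) * B * ..., uniformly *)
  (0 <= a ->
     forall eps, 0 < eps -> exists N : nat, forall n : nat, (N <= n)%nat ->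
     forall (f : R -> R) (fd : nat -> R -> R),
     derivs_C (S n) f fd ->
     (forall y, Icc y -> Rabs (fd (S n) y) <= A) ->
     forall x, Geg a (S n) x = 0 ->
     forall zeta, Icc zeta ->
       Rabs (Eerr a n fd x zeta) <=
       (1 + eps) * (A * D1) * (exp 1 / 2) ^ n * (x + 1)
       * Rpower (INR n) (a - INR n - 3/2)) /\
  (a < 0 ->
     forall eps, 0 < eps -> exists N : nat, forall n : nat, (N <= n)%nat ->
     forall (f : R -> R) (fd : nat -> R -> R),
     derivs_C (S n) f fd ->
     (forall y, Icc y -> Rabs (fd (S n) y) <= A) ->
     forall x, Geg a (S n) x = 0 ->
     forall zeta, Icc zeta ->
       Rabs (Eerr a n fd x zeta) <=
       (1 + eps) * (A * D1 * D2) * (exp 1 / 2) ^ n * (x + 1)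
       * Rpower (INR n) (- INR n - 3/2)).
Proof.
  destruct (Eerr_asymptotic_bound a Ha) as [D1 [HD1 HE]].
  destruct (Geg_abs_le_neg_alpha a Ha) as [D2 [HD2 HD2b]].
  exists D1, D2. split; [exact HD1 |]. split; [exact HD2 |]. split; [| split].
  - intros n f fd _ Hb x Hx zeta Hz. pose proof (Hb zeta Hz) as Hfd. split; [| split].
    + intros Ha0. rewrite explicit_bound_i_eq by auto.
      apply Eerr_abs_le; auto. intros t Ht. now apply Geg_abs_le_1.
    + intros [k ->] Hneg. rewrite explicit_bound_ii_eq by auto.
      apply Eerr_abs_le; auto. intros t Ht. now apply Geg_even_abs_le_center.
    + intros [k ->] Hneg. rewrite explicit_bound_iii_eq by auto.
      apply Eerr_abs_lt; auto; [apply Geg_odd_center_bound_pos; auto |].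
      intros t Ht. now apply Geg_odd_abs_le_center.
  (* The asymptotic bounds hold for every [n >= 1], without the slack [eps]. *)
  - intros Ha0 eps Heps. exists 1%nat. intros n Hn f fd _ Hb x Hx zeta Hz.
    pose proof (HE n fd x zeta A 1 Hn (Hb zeta Hz) Hx (fun t => Geg_abs_le_1 a Ha n t Ha0)).
    assert (HAD : 0 < A * D1) by (apply Rmult_lt_0_compat; lra).
    pose proof (Rmult_lt_0_compat _ _ HAD
                  (asymptotic_rate_pos n x (a - INR n - 3 / 2) (proj1 (Geg_root_in a Ha n x Hx)))). nra.
  - intros Hneg eps Heps. exists 1%nat. intros n Hn f fd _ Hb x Hx zeta Hz.
    pose proof (HE n fd x zeta A _ Hn (Hb zeta Hz) Hx (fun t => HD2b Hneg n t Hn)) as HEn.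
    assert (HAD : 0 < A * D1 * D2) by (repeat apply Rmult_lt_0_compat; lra).
    pose proof (Rmult_lt_0_compat _ _ HAD
                  (asymptotic_rate_pos n x (- INR n - 3 / 2) (proj1 (Geg_root_in a Ha n x Hx)))).
    replace (A * D1 * (D2 * Rpower (INR n) (- a)) * (exp 1 / 2) ^ n * (x + 1)
             * Rpower (INR n) (a - INR n - 3 / 2))
      with (A * D1 * D2 * (exp 1 / 2) ^ n * (x + 1) * Rpower (INR n) (- INR n - 3 / 2)) in HEn
      by (replace (- INR n - 3 / 2) with (- a + (a - INR n - 3 / 2)) by ring; rewrite Rpower_plus; ring).
    nra.
Qed.
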